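(* There exist two populations $P$ and $P'$ with the same users, intervals, speech points, disutilities $b_i$ and initial adopters $\mathcal S_0$, differing only in personalization parameters with $\lambda_i>\lambda_i'$ for all $i\in[n]$ (where $\lambda_i$ belongs to $P$ and $\lambda_i'$ to $P'$), such that $$s(P,I^* )>s(P',I^{*\prime}),$$ where $I^*$ and $I^{*\prime}$ are moderation windows maximizing $s(P,\cdot)$ and $s(P',\cdot)$ respectively. Moreover, for every $b>0$ and $\lambda\in(0,1]$ such a pair can be constructed with $b_1=\dots=b_n=b$, $\lambda_1=\dots=\lambda_n=\lambda$, and $\lambda_1'=\dots=\lambda_n'=\lambda'$ for some appropriately chosen $\lambda'$.
   Context: A population consists of users $1,\dots,n$ and a set $\mathcal S_0$ of initial adopters; user $i$ has a closed interval $[l_i,r_i]$, speech point $p_i\in[l_i,r_i]$, disutility $b_i\ge0$ and personalization parameter $\lambda_i\in[0,1]$. For $\mathcal S\subseteq[n]$, user $i$'s utility is $u_i(\mathcal S)=\sum_{j\in\mathcal S\setminus\{i\}}\big(\mathbf 1[p_j\in[l_i,r_i]]-\lambda_ib_i\mathbf 1[p_j\notin[l_i,r_i]]\big)$. A moderation window is a closed interval $I$; users with $p_i\notin I$ are banned and never on the platform. The platform starts with the non-banned initial adopters; a starvation-free switching order $\sigma:\mathbb Z_{>0}\to[n]$ lists each user infinitely often, and at time $t$ the non-banned user $\sigma(t)$ is on the platform after step $t$ iff $u_{\sigma(t)}(\mathcal W)\ge0$ where $\mathcal W$ is the current set of users on the platform; others are unchanged. With $\mathcal W(P,I,\sigma,t)$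 the set after step $t$, $s(P,I)=\min_\sigma\liminf_{t\to\infty}|\mathcal W(P,I,\sigma,t)|$ over starvation-free $\sigma$. *)

From mathcomp Require Import all_boot all_order all_algebra.
From mathcomp Require Import reals.
Set Implicit Arguments. Unset Strict Implicit. Unset Printing Implicit Defensive.
Import Order.TTheory GRing.Theory Num.Theory.
Local Open Scope ring_scope.

Record population (R : realType) (n : nat) := Population {
  pl : 'I_n -> R;          (* left endpoint l_i of the interval *)
  pr : 'I_n -> R;          (* right endpoint r_i *)
  pp : 'I_n -> R;          (* speech point p_i *)
  pb : 'I_n -> R;          (* disutility b_i *)
  plam : 'I_n -> R;        (* personalization parameter lambda_i *)
  pS0 : {set 'I_n}         (* initial adopters *)
}.

Definition in_cl (R : realType) (x a c : R) : bool := (a <= x) && (x <= c).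

Definition valid_pop (R : realType) n (P : population R n) : Prop :=
  forall i, [/\ in_cl (pp P i) (pl P i) (pr P i), 0 <= pb P i &
               in_cl (plam P i) 0 1].

Definition utility (R : realType) n (P : population R n) (i : 'I_n)
  (S : {set 'I_n}) : R :=
  \sum_(j in S | j != i)
     (if in_cl (pp P j) (pl P i) (pr P i) then 1 else - (plam P i * pb P i)).

(* A moderation window is a closed interval [I.1, I.2]. *)
Definition window (R : realType) := (R * R)%type.

Definition banned (R : realType) n (P : population R n) (I : window R)
  (i : 'I_n) : bool := ~~ in_cl (pp P i) I.1 I.2.

Definition step (R : realType) n (P : population R n) (I : window R)
  (W : {set 'I_n}) (k : 'I_n) : {set 'I_n} :=
  if banned P I k then W
  else if 0 <= utility P k W then k |: W else W :\ k.

(* W(P, I, sigma, t): the set after step t; W 0 is the initial platform.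
   Step t (t >= 1) is performed by user sigma t (sigma 0 is unused). *)
Fixpoint traj (R : realType) n (P : population R n) (I : window R)
  (sigma : nat -> 'I_n) (t : nat) : {set 'I_n} :=
  match t with
  | 0 => [set i in pS0 P | ~~ banned P I i]
  | t'.+1 => step P I (traj P I sigma t') (sigma t)
  end.

Definition starvation_free n (sigma : nat -> 'I_n) : Prop :=
  forall i : 'I_n, forall N : nat, exists t, (N < t)%N /\ sigma t = i.

Definition is_liminf (u : nat -> nat) (k : nat) : Prop :=
  (exists N, forall t, (N <= t)%N -> (k <= u t)%N) /\
  (forall N, exists t, (N <= t)%N /\ (u t <= k)%N).

(* k = s(P, I) = min over starvation-free sigma of liminf |W(P,I,sigma,t)| *)
Definition is_s (R : realType) n (P : population R n) (I : window R)
  (k : nat) : Prop :=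
  (exists sigma, starvation_free sigma /\
                 is_liminf (fun t => #|traj P I sigma t|) k) /\
  (forall sigma k', starvation_free sigma ->
     is_liminf (fun t => #|traj P I sigma t|) k' -> (k <= k')%N).

(* k = s(P, I* ) for a moderation window I* maximizing s(P, .) *)
Definition is_opt_s (R : realType) n (P : population R n) (k : nat) : Prop :=
  exists Istar : window R, is_s P Istar k /\
    forall (J : window R) (j : nat), is_s P J j -> (j <= k)%N.

From mathcomp Require Import all_boot all_order all_algebra.
From mathcomp Require Import reals.
From mathcomp Require Import lra zify.
From Stdlib Require Import Classical.
Set Implicit Arguments.
Unset Strict Implicit.
Unset Printing Implicit Defensive.
Import Order.TTheory GRing.Theory Num.Theory.

(* Users 0, ..., a (a = S^2) speak at 0 and users a+1, ..., 2a+1 speak at 1.  Each user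
   tolerates only its own point, except user 0, whose interval [0, 1] tolerates everyone; the
   initial adopters are the S users a+1, ..., a+S.  Write c = lambda b.
   If 1 < c S and c <= S - 1, then under the window [0, 1] every schedule ends with user 0 and
   all 1-speakers, a + 2 users: a 1-speaker sees at least S - 1 allies and at most one opponent
   (user 0), while any other 0-speaker sees at most one ally and the S adopters against it.
   A window that bans anyone bans a whole side and so keeps at most a + 1 users.
   If instead c S = 1, the round-robin schedule first admits all 0-speakers, each facing at most
   S opponents; then the a + 1 of them drive every 1-speaker away, since S - 1 < c (a + 1).  So
   the window [0, 1] now yields only a + 1 users, which the window [1, 1] also attains. *)

Lemma card_ord_range n lo hi :
  #|[set i : 'I_n | lo <= i < hi]| = minn n hi - minn n lo.
Proof.
rewrite -sum1_card big_mkcond /=.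
elim: n => [|n IHn]; first by rewrite big_ord0 !min0n.
rewrite big_ord_recr /= inE.
rewrite (eq_bigr (fun i : 'I_n => if lo <= i < hi then 1 else 0)); last first.
  by move=> i _; rewrite inE.
rewrite (_ : \sum_(i < n) _ = minn n hi - minn n lo); last first.
  by rewrite -IHn; apply: eq_bigr => i _; rewrite inE.
by case: (leqP lo n); case: (ltnP n hi) => /=; lia.
Qed.

Lemma least_nat_witness (Q : nat -> Prop) k :
  Q k -> exists k0, Q k0 /\ forall j, j < k0 -> ~ Q j.
Proof.
elim/ltn_ind: k => k IHk Qk.
have [[j [jk Qj]]|no_smaller] := classic (exists j, j < k /\ Q j).
  exact: IHk jk Qj.
by exists k; split=> // j jk Qj; apply: no_smaller; exists j.
Qed.

Lemma liminf_exists (u : nat -> nat) B :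
  (forall t, u t <= B) -> exists k, is_liminf u k.
Proof.
move=> uB.
pose frequently_le k := forall N, exists t, N <= t /\ u t <= k.
have freq_B : frequently_le B by move=> N; exists N.
have [[|k] [freq_k min_k]] := least_nat_witness freq_B.
  by exists 0; split=> //; exists 0.
exists k.+1; split=> //.
have /not_all_ex_not [N notfreq] := min_k k (ltnSn k).
exists N => t Nt; rewrite leqNgt; apply/negP => utk.
by apply: notfreq; exists t.
Qed.

Definition round_robin n (t : nat) : 'I_n.+1 := inord (t.-1 %% n.+1).

Lemma round_robin_starvation_free n : starvation_free (round_robin n).
Proof.
move=> i N; exists (N * n.+1 + i).+1; split; first by nia.
by apply: val_inj; rewrite /round_robin /= modnMDl modn_small // inordK.
Qed.

Lemma round_robin_small n t : t < n.+1 -> val (round_robin n t.+1) = t.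
Proof. by move=> tn; rewrite /round_robin /= modn_small // inordK. Qed.

Local Open Scope ring_scope.

Section Dynamics.
Variables (R : realType) (n : nat) (P : population R n).

Definition liked_in (k : 'I_n) (W : {set 'I_n}) : {set 'I_n} :=
  [set j in W | (j != k) && in_cl (pp P j) (pl P k) (pr P k)].
Definition disliked_in (k : 'I_n) (W : {set 'I_n}) : {set 'I_n} :=
  [set j in W | (j != k) && ~~ in_cl (pp P j) (pl P k) (pr P k)].

Lemma utility_liked k W : utility P k W =
  #|liked_in k W|%:R - plam P k * pb P k * #|disliked_in k W|%:R.
Proof.
rewrite /utility (bigID (fun j => in_cl (pp P j) (pl P k) (pr P k))) /=.
rewrite (eq_bigr (fun=> 1)); last by move=> j /andP[_ ->].
rewrite [X in _ + X](eq_bigr (fun=> - (plam P k * pb P k))); last first.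
  by move=> j /andP[_ /negbTE ->].
rewrite !sumr_const mulNrn -[X in - X]mulr_natr.
by congr (_%:R - _ * _%:R); apply: eq_card => j; rewrite !inE andbA.
Qed.

Section Step.
Variables (I : window R) (W : {set 'I_n}) (k : 'I_n).
Hypotheses (k_allowed : ~~ banned P I k) (c_ge0 : 0 <= plam P k * pb P k).

Lemma step_join (x y : nat) : (x <= #|liked_in k W|)%N -> (#|disliked_in k W| <= y)%N ->
  plam P k * pb P k * y%:R <= x%:R -> step P I W k = k |: W.
Proof.
move=> xl dy cyx; rewrite /step (negbTE k_allowed) utility_liked subr_ge0 ifT //.
rewrite -(ler_nat R) in xl; rewrite -(ler_nat R) in dy.
by rewrite (le_trans _ xl) // (le_trans _ cyx) // ler_wpM2l.
Qed.

Lemma step_leave (x y : nat) : (#|liked_in k W| <= x)%N -> (y <= #|disliked_in k W|)%N ->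
  x%:R < plam P k * pb P k * y%:R -> step P I W k = W :\ k.
Proof.
move=> lx yd xcy; rewrite /step (negbTE k_allowed) utility_liked subr_ge0 ifF //.
rewrite -(ler_nat R) in lx; rewrite -(ler_nat R) in yd.
by apply/negbTE; rewrite -ltNge (le_lt_trans lx) // (lt_le_trans xcy) // ler_wpM2l.
Qed.

End Step.

Variable I : window R.

Lemma traj_sub_allowed sigma t : traj P I sigma t \subset [set i | ~~ banned P I i].
Proof.
elim: t => [|t IHt] /=; first by apply/subsetP => i; rewrite !inE => /andP[].
rewrite /step; case: ifP => // k_allowed; case: ifP => _.
  by rewrite subUset sub1set inE k_allowed IHt.
exact: subset_trans (subsetDl _ _) IHt.
Qed.

Lemma is_s_le_frequently sigma B j : starvation_free sigma ->
  (forall N, exists t, (N <= t)%N /\ (#|traj P I sigma t| <= B)%N) ->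
  is_s P I j -> (j <= B)%N.
Proof.
move=> sf freqB [_ s_min].
have card_le_n t : (#|traj P I sigma t| <= n)%N.
  by rewrite (leq_trans (max_card _)) ?card_ord.
have [m m_liminf] := liminf_exists card_le_n.
have [[N m_le] _] := m_liminf.
have [t [Nt tB]] := freqB N.
exact: leq_trans (s_min sigma m sf m_liminf) (leq_trans (m_le t Nt) tB).
Qed.

Lemma is_s_eventually_card K : (exists sigma : nat -> 'I_n, starvation_free sigma) ->
  (forall sigma, starvation_free sigma ->
     exists N, forall t, (N <= t)%N -> #|traj P I sigma t| = K) ->
  is_s P I K.
Proof.
move=> [sigma0 sf0] eventually_K; split.
  have [N HN] := eventually_K sigma0 sf0.
  exists sigma0; split=> //; split; first by exists N => t Nt; rewrite HN.
  by move=> M; exists (maxn M N); rewrite leq_maxl HN // leq_maxr.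
move=> sigma k' sf [_ frequent_k'].
have [N HN] := eventually_K sigma sf.
have [t [Nt tk']] := frequent_k' N.
by rewrite -(HN t Nt).
Qed.

Lemma traj_eventually_eq (B T : {set 'I_n}) sigma : starvation_free sigma ->
  B \subset traj P I sigma 0 -> traj P I sigma 0 \subset T ->
  (forall (W : {set 'I_n}) k, B \subset W -> W \subset T ->
     step P I W k = if k \in T then k |: W else W) ->
  exists N, forall t, (N <= t)%N -> traj P I sigma t = T.
Proof.
move=> sf B0 T0 stepE.
have between t : B \subset traj P I sigma t /\ traj P I sigma t \subset T.
  elim: t => [|t [IH1 IH2]] //=; rewrite stepE //; case: ifP => // kT.
  by rewrite subsetU ?IH1 ?orbT // subUset sub1set kT IH2.
have growing t t' : (t <= t')%N -> traj P I sigma t \subset traj P I sigma t'.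
  move=> /subnKC <-; elim: (t' - t)%N => [|d IHd]; first by rewrite addn0.
  have [B_sub sub_T] := between (t + d)%N.
  by rewrite addnS /= stepE //; case: ifP => // _; exact: subset_trans IHd (subsetUr _ _).
have reached i : exists t, (i \in T) ==> (i \in traj P I sigma t).
  have [[|t] [// _ sigma_t]] := sf i 0%N.
  have [B_sub sub_T] := between t.
  by exists t.+1; apply/implyP => iT; rewrite /= stepE // sigma_t iT setU11.
have [f Hf] := fin_all_exists reached.
exists (\max_i f i) => t Nt; apply/eqP; rewrite eqEsubset (between t).2.
apply/subsetP => i iT; move/implyP: (Hf i) => /(_ iT).
by apply/subsetP/growing/(leq_trans _ Nt)/leq_bigmax.
Qed.

Lemma eq_traj_banned (J : window R) sigma : banned P I =1 banned P J ->
  traj P I sigma =1 traj P J sigma.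
Proof.
move=> eq_banned; elim=> [|t IHt] /=; first by apply/setP => i; rewrite !inE eq_banned.
by rewrite IHt /step eq_banned.
Qed.

End Dynamics.

Section TwoGroups.
Variables (R : realType) (S : nat).
Local Notation a := (S * S)%N.
Local Notation n := (a + a.+1).+1.
Local Notation rr := (round_robin (a + a.+1)).

Definition speech (i : 'I_n) : R := if (i <= a)%N then 0 else 1.
Definition right_end (i : 'I_n) : R := if (i : nat) == 0%N then 1 else speech i.
Definition adopters : {set 'I_n} := [set i : 'I_n | (a.+1 <= i < a.+1 + S)%N].
Definition low : {set 'I_n} := [set i : 'I_n | (0 <= i < a.+1)%N].
Definition high : {set 'I_n} := [set i : 'I_n | (a.+1 <= i < n)%N].

Definition pop (lam bb : R) : population R n :=
  Population speech right_end speech (fun=> bb) (fun=> lam) adopters.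

Definition full : window R := (0, 1).
Definition high_only : window R := (1, 1).

Lemma card_adopters : #|adopters| = S.
Proof. rewrite card_ord_range; nia. Qed.

Lemma card_low : #|low| = a.+1.
Proof. rewrite card_ord_range; lia. Qed.

Lemma card_high : #|high| = a.+1.
Proof. rewrite card_ord_range; lia. Qed.

Lemma card_ord0_high : #|ord0 |: high| = a.+2.
Proof. by rewrite cardsU1 card_high inE. Qed.

Lemma in_cl_speech j k :
  in_cl (speech j) (speech k) (right_end k) =
  ((k : nat) == 0%N) || ((j <= a) == (k <= a))%N.
Proof.
rewrite /in_cl /right_end /speech.
case: eqVneq => [k0|_] /=; first by rewrite k0; case: ifP; rewrite ?lexx ?ler01.
by case: ifP; case: ifP; rewrite ?lexx ?ler01 ?ler10 ?andbF.
Qed.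

Lemma pop_valid lam bb : 0 <= bb -> 0 <= lam <= 1 -> valid_pop (pop lam bb).
Proof.
by move=> bb_ge0 lam01 i; split=> //=; rewrite in_cl_speech eqxx orbT.
Qed.

(* The platform once users 0, ..., t-1 have moved in round-robin order when c S = 1. *)
Definition sweep (t : nat) : {set 'I_n} :=
  [set i : 'I_n | if (i <= a)%N then (i < t)%N else (t <= i < a.+1 + S)%N].

Lemma sweep_end t : (a.+1 + S <= t)%N -> sweep t = low.
Proof.
by move=> t_ge; apply/setP => i; rewrite !inE; have := ltn_ord i; case: ifP; lia.
Qed.

Section Population.
Variables lam bb : R.
Local Notation P := (pop lam bb).
Local Notation c := (lam * bb).

Lemma in_liked k W j : (j \in liked_in P k W) =
  [&& j \in W, (j : nat) != k & ((k : nat) == 0%N) || ((j <= a) == (k <= a))%N].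
Proof. by rewrite !inE in_cl_speech val_eqE andbA. Qed.

Lemma in_disliked k W j : (j \in disliked_in P k W) =
  [&& j \in W, (j : nat) != k, (k : nat) != 0%N & ((j <= a) != (k <= a))%N].
Proof. by rewrite !inE in_cl_speech val_eqE negb_or andbA. Qed.

Lemma banned_full i : banned P full i = false.
Proof. by rewrite /banned /in_cl /= /speech; case: ifP; rewrite ?lexx ?ler01. Qed.

Lemma banned_high_only i : banned P high_only i = (i <= a)%N.
Proof. by rewrite /banned /in_cl /= /speech; case: ifP; rewrite ?lexx ?ler10. Qed.

Lemma step_full_target (W : {set 'I_n}) k : 0 <= c -> 1 < c * S%:R -> c <= S%:R - 1 ->
  adopters \subset W -> W \subset ord0 |: high ->
  step P full W k = if k \in ord0 |: high then k |: W else W.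
Proof.
move=> c_ge0 cS_gt1 c_le /subsetP adoptersW /subsetP W_target.
have allowed : ~~ banned P full k by rewrite banned_full.
have S_gt0 : (0 < S)%N by case: S cS_gt1 => //; rewrite mulr0 ltr10.
have in_target j : (j \in ord0 |: high) = ((j : nat) == 0%N) || (a < j)%N.
  by rewrite !inE -val_eqE /=; have := ltn_ord j; lia.
rewrite in_target; case: ifPn => [/orP[k0|k_high]|k_other].
    apply: (step_join allowed c_ge0 (x := 0) (y := 0)) => //; last by rewrite mulr0.
    rewrite leqn0 cards_eq0 -subset0; apply/subsetP => j.
    by rewrite in_disliked k0 !andbF.
  apply: (step_join allowed c_ge0 (x := S - 1) (y := 1)); last by rewrite natrB // mulr1.
  - apply: (@leq_trans #|adopters :\ k|).
      rewrite -[X in (X - 1 <= _)%N]card_adopters (cardsD1 k).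
      by rewrite leq_subLR leq_add2r leq_b1.
    apply/subset_leq_card/subsetP => j /setD1P[jk j_adopt].
    by rewrite in_liked adoptersW // val_eqE jk; move: j_adopt; rewrite inE; lia.
  - rewrite -(cards1 (@ord0 (a + a.+1))); apply/subset_leq_card/subsetP => j.
    rewrite in_disliked inE -val_eqE => /and4P[/W_target]; rewrite in_target /=; lia.
rewrite (step_leave allowed c_ge0 (x := 1) (y := S)) //.
- have k_notin_W : k \notin W by apply: contra k_other => /W_target; rewrite in_target.
  by apply/setP => j; rewrite !inE; case: eqVneq => // ->; rewrite (negbTE k_notin_W).
- rewrite -(cards1 (@ord0 (a + a.+1))); apply/subset_leq_card/subsetP => j.
  rewrite in_liked inE -val_eqE => /and3P[/W_target]; rewrite in_target /=; lia.
- rewrite -[X in (X <= _)%N]card_adopters; apply/subset_leq_card/subsetP => j j_adopt.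
  by rewrite in_disliked adoptersW //; move: j_adopt; rewrite inE; lia.
Qed.

Lemma traj_full_eventually sigma : 0 <= c -> 1 < c * S%:R -> c <= S%:R - 1 ->
  starvation_free sigma ->
  exists N, forall t, (N <= t)%N -> traj P full sigma t = ord0 |: high.
Proof.
move=> c_ge0 cS_gt1 c_le sf.
have traj0 : traj P full sigma 0 = adopters.
  by apply/setP => i; rewrite /= !inE banned_full andbT.
apply: (traj_eventually_eq sf (B := adopters)); rewrite ?traj0 //.
  by apply/subsetP => i; rewrite !inE -val_eqE /=; have := ltn_ord i; lia.
by move=> W k; apply: step_full_target.
Qed.

Lemma traj_high_only_eventually sigma : 0 <= c -> starvation_free sigma ->
  exists N, forall t, (N <= t)%N -> traj P high_only sigma t = high.
Proof.
move=> c_ge0 sf.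
apply: (traj_eventually_eq sf (B := set0)) => [|| W k _ /subsetP W_high].
- exact: sub0set.
- apply/subsetP => i; rewrite /= !inE banned_high_only => /andP[_].
  by have := ltn_ord i; lia.
rewrite inE; case: (ltnP a k) => [k_high|k_low] /=; last first.
  by rewrite /step banned_high_only k_low.
have allowed : ~~ banned P high_only k by rewrite banned_high_only -ltnNge.
rewrite ltn_ord; apply: (step_join allowed c_ge0 (x := 0) (y := 0)) => //.
  rewrite leqn0 cards_eq0 -subset0; apply/subsetP => j.
  by rewrite in_disliked inE => /and4P[/W_high]; rewrite inE; lia.
by rewrite mulr0.
Qed.

Lemma step_sweep (k : 'I_n) : 0 < c -> c * S%:R = 1 -> (k < a.+1 + S)%N ->
  step P full (sweep k) k = sweep k.+1.
Proof.
move=> c_gt0 cS1 k_lt.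
have allowed : ~~ banned P full k by rewrite banned_full.
have c_ge0 := ltW c_gt0.
have [k_low|k_high] := leqP k a.
  have -> : sweep k.+1 = k |: sweep k.
    by apply/setP => j; rewrite !inE -val_eqE /=; case: ifP; lia.
  have [k0|k_pos] := eqVneq (k : nat) 0%N.
    apply: (step_join allowed c_ge0 (x := 0) (y := 0)) => //; last by rewrite mulr0.
    rewrite leqn0 cards_eq0 -subset0; apply/subsetP => j.
    by rewrite in_disliked k0 !andbF.
  apply: (step_join allowed c_ge0 (x := 1) (y := S)); last by rewrite cS1.
    rewrite card_gt0; apply/set0Pn; exists ord0.
    by rewrite in_liked !inE /=; lia.
  rewrite -[X in (_ <= X)%N]card_adopters; apply/subset_leq_card/subsetP => j.
  by rewrite in_disliked !inE; case: ifP; lia.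
have -> : sweep k.+1 = sweep k :\ k.
  by apply/setP => j; rewrite !inE -val_eqE /=; case: ifP; lia.
apply: (step_leave allowed c_ge0 (x := S - 1) (y := a.+1)).
- have k_adopter : k \in adopters by rewrite inE; lia.
  rewrite -[X in (_ <= X - 1)%N]card_adopters (cardsD1 k adopters) k_adopter.
  rewrite add1n subn1 /=.
  apply/subset_leq_card/subsetP => j; rewrite in_liked !inE -val_eqE /=; case: ifP; lia.
- rewrite -[X in (X <= _)%N]card_low; apply/subset_leq_card/subsetP => j.
  by rewrite in_disliked !inE; case: ifP; lia.
have S_gt0 : (0 < S)%N.
  by case: S cS1 => //; rewrite mulr0 => /eqP; rewrite eq_sym oner_eq0.
rewrite /= natrB // -[(S * S).+1%:R]natr1 natrM mulrDr mulrA cS1 mul1r mulr1; lra.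
Qed.

Lemma step_low (k : 'I_n) : 0 < c -> step P full low k = low.
Proof.
move=> c_gt0.
have allowed : ~~ banned P full k by rewrite banned_full.
have c_ge0 := ltW c_gt0.
have [k_low|k_high] := leqP k a.
  rewrite (step_join allowed c_ge0 (x := 0) (y := 0)) //; last by rewrite mulr0.
    by apply/setP => j; rewrite !inE -val_eqE /=; lia.
  rewrite leqn0 cards_eq0 -subset0; apply/subsetP => j.
  by rewrite in_disliked !inE; lia.
rewrite (step_leave allowed c_ge0 (x := 0) (y := 1)).
- by apply/setP => j; rewrite !inE -val_eqE /=; lia.
- rewrite leqn0 cards_eq0 -subset0; apply/subsetP => j.
  by rewrite in_liked !inE; lia.
- rewrite card_gt0; apply/set0Pn; exists ord0.
  by rewrite in_disliked !inE /=; lia.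
- by rewrite mulr1.
Qed.

Lemma traj_round_robin t : 0 < c -> c * S%:R = 1 ->
  traj P full (rr) t = sweep t.
Proof.
move=> c_gt0 cS1; elim: t => [|t IHt] /=.
  by apply/setP => i; rewrite !inE banned_full andbT; case: ifP; lia.
rewrite IHt; have [t_lt|t_ge] := ltnP t (a.+1 + S).
  have rr_t : val (rr t.+1) = t by rewrite round_robin_small //; nia.
  by rewrite -[in sweep t]rr_t -[in sweep t.+1]rr_t step_sweep // rr_t.
rewrite !sweep_end ?step_low //; lia.
Qed.

Lemma window_cases (J : window R) :
  banned P J =1 banned P full \/ (#|[set i | ~~ banned P J i]| <= a.+1)%N.
Proof.
have bannedE i : banned P J i =
    if (i <= a)%N then ~~ in_cl 0 J.1 J.2 else ~~ in_cl 1 J.1 J.2.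
  by rewrite /banned /= /speech; case: ifP.
case J0 : (in_cl 0 J.1 J.2); last first.
  right; rewrite -[X in (_ <= X)%N]card_high; apply/subset_leq_card/subsetP => i.
  by rewrite !inE bannedE J0; have := ltn_ord i; case: ifP => //=; lia.
case J1 : (in_cl 1 J.1 J.2); last first.
  right; rewrite -[X in (_ <= X)%N]card_low; apply/subset_leq_card/subsetP => i.
  by rewrite !inE bannedE J1; case: ifP => //=; lia.
by left => i; rewrite banned_full bannedE J0 J1; case: ifP.
Qed.

Lemma is_s_le (J : window R) j B : (a.+1 <= B)%N ->
  (forall N, exists t, (N <= t)%N /\
     (#|traj P full (rr) t| <= B)%N) ->
  is_s P J j -> (j <= B)%N.
Proof.
move=> aB freqB.
apply: (is_s_le_frequently (round_robin_starvation_free (n := a + a.+1))) => N.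
have [same|few] := window_cases J.
  by have [t [Nt tB]] := freqB N; exists t; rewrite (eq_traj_banned _ same).
exists N; split=> //; apply: leq_trans (leq_trans few aB).
exact/subset_leq_card/traj_sub_allowed.
Qed.

Lemma is_opt_s_full : 0 <= c -> 1 < c * S%:R -> c <= S%:R - 1 -> is_opt_s P a.+2.
Proof.
move=> c_ge0 cS_gt1 c_le.
have rr_sf := round_robin_starvation_free (n := a + a.+1).
have [N0 HN0] := traj_full_eventually c_ge0 cS_gt1 c_le rr_sf.
exists full; split.
  apply: is_s_eventually_card; first by exists (rr).
  move=> sigma sf; have [N HN] := traj_full_eventually c_ge0 cS_gt1 c_le sf.
  by exists N => t Nt; rewrite HN // card_ord0_high.
move=> J j; apply: is_s_le => // N.
by exists (maxn N N0); rewrite leq_maxl HN0 ?leq_maxr // card_ord0_high.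
Qed.

Lemma is_opt_s_high_only : 0 < c -> c * S%:R = 1 -> is_opt_s P a.+1.
Proof.
move=> c_gt0 cS1.
exists high_only; split.
  apply: is_s_eventually_card.
    by exists rr; exact: round_robin_starvation_free.
  move=> sigma sf; have [N HN] := traj_high_only_eventually (ltW c_gt0) sf.
  by exists N => t Nt; rewrite HN // card_high.
move=> J j; apply: is_s_le => // N.
exists (maxn N (a.+1 + S)); rewrite leq_maxl traj_round_robin // sweep_end ?card_low //.
exact: leq_maxr.
Qed.

End Population.
End TwoGroups.

Lemma exists_threshold (R : archiRealFieldType) (c : R) :
  0 < c -> exists S : nat, 1 < c * S%:R /\ c <= S%:R - 1.
Proof.
move=> c_gt0; have c_inv_gt0 : 0 < c^-1 by rewrite invr_gt0.
have [S S_big] : exists S : nat, c + c^-1 + 1 < S%:R.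
  by exists (Num.Def.archi_bound (c + c^-1 + 1)); rewrite archi_boundP ?addr_ge0 ?ltW.
exists S; rewrite -ltr_pdivrMl // mulr1.
by move: S_big c_inv_gt0; move: (c^-1) => d; split; lra.
Qed.

Lemma uniform_counterexample (R : realType) (bb la : R) : 0 < bb -> 0 < la <= 1 ->
  exists (n : nat) (l r p : 'I_n -> R) (S0 : {set 'I_n}) (la' : R),
    let P := Population l r p (fun _ => bb) (fun _ => la) S0 in
    let P' := Population l r p (fun _ => bb) (fun _ => la') S0 in
    [/\ valid_pop P, valid_pop P', la' < la &
     exists k k' : nat, [/\ is_opt_s P k, is_opt_s P' k' & (k' < k)%N]].
Proof.
move=> bb_gt0 /andP[la_gt0 la_le1].
have [S [cS_gt1 c_le]] := exists_threshold (mulr_gt0 la_gt0 bb_gt0).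
have S_gt0 : 0 < S%:R :> R.
  by case: S cS_gt1 {c_le} => [|S]; rewrite ?mulr0 ?ltr10 ?ltr0Sn.
pose la' := (S%:R * bb)^-1.
have c'E : la' * bb = S%:R^-1 by rewrite /la' invfM -mulrA mulVf ?mulr1 ?gt_eqF.
have c'S : la' * bb * S%:R = 1 by rewrite c'E mulVf ?gt_eqF.
have la'_gt0 : 0 < la' by rewrite invr_gt0 mulr_gt0.
have la'_lt : la' < la.
  rewrite -(ltr_pM2r bb_gt0) c'E -(ltr_pM2r S_gt0) mulVf ?gt_eqF //.
exists _, (@speech R S), (@right_end R S), (@speech R S), (adopters S), la'.
move=> P P'; split.
- by apply: pop_valid; rewrite ?(ltW bb_gt0) ?(ltW la_gt0).
- apply: pop_valid; rewrite ?(ltW bb_gt0) ?(ltW la'_gt0) //.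
  exact: ltW (lt_le_trans la'_lt la_le1).
- exact: la'_lt.
- exists (S * S).+2, (S * S).+1; split=> //.
  + exact: is_opt_s_full (ltW (mulr_gt0 la_gt0 bb_gt0)) cS_gt1 c_le.
  + by apply: is_opt_s_high_only; rewrite ?c'S ?mulr_gt0.
Qed.

Theorem proposition6 (R : realType) :
  (exists (n : nat) (l r p b lam lam' : 'I_n -> R) (S0 : {set 'I_n}),
     let P := Population l r p b lam S0 in
     let P' := Population l r p b lam' S0 in
     [/\ valid_pop P, valid_pop P', (forall i, lam' i < lam i) &
      exists k k' : nat, [/\ is_opt_s P k, is_opt_s P' k' & (k' < k)%N]])
  /\
  (forall (bb la : R), 0 < bb -> 0 < la <= 1 ->
   exists (n : nat) (l r p : 'I_n -> R) (S0 : {set 'I_n}) (la' : R),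
     let P := Population l r p (fun _ => bb) (fun _ => la) S0 in
     let P' := Population l r p (fun _ => bb) (fun _ => la') S0 in
     [/\ valid_pop P, valid_pop P', la' < la &
      exists k k' : nat, [/\ is_opt_s P k, is_opt_s P' k' & (k' < k)%N]]).
Proof.
split; last exact: uniform_counterexample.
have [||n [l [r [p [S0 [la' [P_valid P'_valid la'_lt opt]]]]]]] :=
  @uniform_counterexample R 1 1; rewrite ?ltr01 ?lexx //.
by exists n, l, r, p, (fun=> 1), (fun=> 1), (fun=> la'), S0.
Qed.
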